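(* The action of the additive group $\mathfrak h$ on $\mathfrak h$ by translation extends to the action on $\bar{\mathfrak h}$ given by $y\cdot(x_\lambda)_\lambda=(x_\lambda+\lambda(y))_\lambda$ (with $\infty+c=\infty$), and $$\bar{\mathfrak h}=\bigsqcup_{k=0}^{r}\ \bigsqcup_{\Psi\ \text{$k$-step good}}\mathring C(\Psi),$$ a disjoint union over all $k$-step good root subsystems $\Psi$ of $\Phi$, $0\le k\le r$. The sets $\mathring C(\Psi)$ are exactly the $\mathfrak h$-orbits on $\bar{\mathfrak h}$ (in particular there are finitely many, and $\mathring C(\Phi)=\mathfrak h$ is the open orbit), each $\mathring C(\Psi)$ is isomorphic to an affine space of dimension $\operatorname{rk}\Psi=r-k$, and this decomposition is an affine paving of $\bar{\mathfrak h}$.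
   Context: Let $\mathfrak g$ be a complex semisimple Lie algebra, $\mathfrak h$ a Cartan subalgebra, $r=\dim\mathfrak h$, $\Phi\subset\mathfrak h^*$ its root system, $\Phi^+$ a fixed set of positive roots, $d=|\Phi^+|$. Identify $\mathbb C$ with $\{[x_0:x_1]:x_0\ne0\}\subset\mathbb P^1$ via $c\mapsto[1:c]$, $\infty=[0:1]$; points of $(\mathbb P^1)^d$ are $x=(x_\lambda)_{\lambda\in\Phi^+}$. Identify $\mathfrak h$ with its image under $h\mapsto(\lambda(h))_{\lambda\in\Phi^+}\in\mathbb C^d\subset(\mathbb P^1)^d$; $\bar{\mathfrak h}$ is the Zariski closure of $\mathfrak h$ in $(\mathbb P^1)^d$. A root subsystem $\Psi\subseteq\Phi$ is closed if $\lambda,\mu\in\Psi$, $\lambda+\mu\in\Phi$ imply $\lambda+\mu\in\Psi$; $\operatorname{rk}\Psi=\dim\operatorname{Span}\Psi$. A good root subsystem of a root system $\Theta$ of rank $m$ is a closed root subsystem of rank $m-1$ maximal under inclusion among closed root subsystems of rank $m-1$. The $0$-step good root subsystem of $\Phi$ is $\Phi$; for $k\ge1$, a $k$-step good root subsystem is a good root subsystem of a $(k-1)$-step good root subsystem. For a closed root subsystem $\Psi$ with $\Psi^+=\Psi\cap\Phi^+$, $\mathring C(\Psi)$ is the set of $x\in(\mathbb P^1)^d$ with $x_\lambda=\infty$ for $\lambda\in\Phi^+\setminus\Psi$ and $(x_\lambda)_{\lambda\in\Psi^+}=(\lambda(h))_{\lambda\in\Psi^+}$ for some $h\in\mathfrak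 h$. *)

From HB Require Import structures.
From mathcomp Require Import all_boot all_order all_algebra.
From mathcomp Require Import mpoly.
Set Implicit Arguments. Unset Strict Implicit. Unset Printing Implicit Defensive.
Import Order.TTheory GRing.Theory Num.Theory.
Local Open Scope ring_scope.

(* subalgebra h is 'rV[C]_r, and h^* is identified with 'rV[C]_r via the     *)
(* pairing  pairing lam h = lam(h) = \sum_k lam_k h_k.                        *)
(* The positive roots Phi^+ are indexed by a finite type I via pos : I -> h^*;*)
(* all roots are indexed by J := bool * I, (true,i) |-> pos i and            *)
(* (false,i) |-> - pos i.  cor i in h is the coroot of pos i.                *)

Definition pairing (C : numClosedFieldType) (r : nat) (lam h : 'rV[C]_r) : C :=
  \sum_(k < r) lam 0 k * h 0 k.

Definition rootidx (I : finType) := (bool * I)%type.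

Definition root (C : numClosedFieldType) (r : nat) (I : finType)
  (pos : I -> 'rV[C]_r) (j : rootidx I) : 'rV[C]_r :=
  if j.1 then pos j.2 else - pos j.2.

(* reflection s_alpha for alpha = +- pos i (s_{-alpha} = s_alpha) *)
Definition refl (C : numClosedFieldType) (r : nat) (I : finType)
  (pos cor : I -> 'rV[C]_r) (i : I) (v : 'rV[C]_r) : 'rV[C]_r :=
  v - pairing v (cor i) *: pos i.

(* Phi = {+- pos i} is a reduced (crystallographic) root system spanning h^*,*)
(* i.e. the root system of a semisimple Lie algebra with Cartan subalgebra h.*)
Definition is_root_system (C : numClosedFieldType) (r : nat) (I : finType)
  (pos cor : I -> 'rV[C]_r) : Prop :=
  [/\ injective (root pos),
      (forall i, pos i != 0),
      (forall i, pairing (pos i) (cor i) = 2),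
      (forall i (b : rootidx I), exists c, root pos c = refl pos cor i (root pos b))
    & [/\ (forall i j, exists z : int, pairing (pos j) (cor i) = z%:~R),
      (forall (j k : rootidx I) (c : C), root pos k = c *: root pos j -> c = 1 \/ c = -1)
    & \rank (\sum_(j : rootidx I) <<root pos j>>)%MS = r]].

(* Phi^+ = {pos i} is the set of positive roots w.r.t. a base Delta = pos @ S *)
Definition is_positive_system (C : numClosedFieldType) (r : nat) (I : finType)
  (pos : I -> 'rV[C]_r) : Prop :=
  exists S : {set I},
    \rank (\sum_(s in S) <<pos s>>)%MS = #|S| /\
    forall i, exists n : I -> nat, pos i = \sum_(s in S) (n s)%:R *: pos s.

(* ---------------- (P^1)^d, with P^1 = C u {oo} = option C ---------------- *)
(* Some c = [1:c],  None = oo = [0:1].                                        *)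
Definition pt (C : numClosedFieldType) (I : finType) := I -> option C.

Definition emb (C : numClosedFieldType) (r : nat) (I : finType)
  (pos : I -> 'rV[C]_r) (h : 'rV[C]_r) : pt C I :=
  fun i => Some (pairing (pos i) h).

Definition act (C : numClosedFieldType) (r : nat) (I : finType)
  (pos : I -> 'rV[C]_r) (y : 'rV[C]_r) (x : pt C I) : pt C I :=
  fun i => omap (fun c => c + pairing (pos i) y) (x i).

(* homogeneous coordinates: variable (lshift i) is x_{i,0}, (rshift i) is x_{i,1} *)
Definition nvars (I : finType) := (#|I| + #|I|)%N.

Definition hc0 (C : numClosedFieldType) (o : option C) : C :=
  if o is Some _ then 1 else 0.
Definition hc1 (C : numClosedFieldType) (o : option C) : C :=
  if o is Some c then c else 1.

Definition homcoords (C : numClosedFieldType) (I : finType) (x : pt C I)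
  : 'I_(nvars I) -> C :=
  fun k => match split k with
           | inl a => hc0 (x (enum_val a))
           | inr a => hc1 (x (enum_val a))
           end.

Definition mhomog (C : numClosedFieldType) (I : finType) (e : I -> nat)
  (p : {mpoly C[nvars I]}) : Prop :=
  forall m, m \in msupp p -> forall i : I,
    (m (lshift #|I| (enum_rank i)) + m (rshift #|I| (enum_rank i)))%N = e i.

Definition vanish (C : numClosedFieldType) (I : finType)
  (p : {mpoly C[nvars I]}) (x : pt C I) : Prop :=
  p.@[homcoords x] = 0.

Definition zclosed (C : numClosedFieldType) (I : finType) (A : pt C I -> Prop)
  : Prop :=
  exists F : (I -> nat) -> {mpoly C[nvars I]} -> Prop,
    (forall e p, F e p -> mhomog e p) /\
    (forall x, A x <-> (forall e p, F e p -> vanish p x)).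

Definition zclosure (C : numClosedFieldType) (I : finType) (A : pt C I -> Prop)
  (x : pt C I) : Prop :=
  forall e (p : {mpoly C[nvars I]}), mhomog e p ->
    (forall y, A y -> vanish p y) -> vanish p x.

Definition hbar (C : numClosedFieldType) (r : nat) (I : finType)
  (pos : I -> 'rV[C]_r) : pt C I -> Prop :=
  zclosure (fun x => exists h, x = emb pos h).

Definition root_subsystem (C : numClosedFieldType) (r : nat) (I : finType)
  (pos cor : I -> 'rV[C]_r) (Psi : {set rootidx I}) : Prop :=
  (forall j, j \in Psi -> (~~ j.1, j.2) \in Psi) /\
  (forall a b c, a \in Psi -> b \in Psi ->
     root pos c = refl pos cor a.2 (root pos b) -> c \in Psi).

Definition closed_subsystem (C : numClosedFieldType) (r : nat) (I : finType)
  (pos cor : I -> 'rV[C]_r) (Psi : {set rootidx I}) : Prop :=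
  root_subsystem pos cor Psi /\
  (forall a b c, a \in Psi -> b \in Psi ->
     root pos a + root pos b = root pos c -> c \in Psi).

Definition rk (C : numClosedFieldType) (r : nat) (I : finType)
  (pos : I -> 'rV[C]_r) (Psi : {set rootidx I}) : nat :=
  \rank (\sum_(j in Psi) <<root pos j>>)%MS.

Definition good (C : numClosedFieldType) (r : nat) (I : finType)
  (pos cor : I -> 'rV[C]_r) (Theta Psi : {set rootidx I}) : Prop :=
  [/\ closed_subsystem pos cor Psi, Psi \subset Theta,
      (rk pos Psi).+1 = rk pos Theta &
      forall Psi', closed_subsystem pos cor Psi' -> Psi' \subset Theta ->
        (rk pos Psi').+1 = rk pos Theta -> Psi \subset Psi' -> Psi' = Psi].

Inductive kstep_good (C : numClosedFieldType) (r : nat) (I : finType)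
  (pos cor : I -> 'rV[C]_r) : nat -> {set rootidx I} -> Prop :=
| kstep0 : kstep_good pos cor 0 setT
| kstepS k Theta Psi : kstep_good pos cor k Theta -> good pos cor Theta Psi ->
    kstep_good pos cor k.+1 Psi.

Definition Cring (C : numClosedFieldType) (r : nat) (I : finType)
  (pos : I -> 'rV[C]_r) (Psi : {set rootidx I}) (x : pt C I) : Prop :=
  (forall i, (true, i) \notin Psi -> x i = None) /\
  exists h : 'rV[C]_r, forall i, (true, i) \in Psi -> x i = Some (pairing (pos i) h).

(* A is isomorphic (as a variety) to the affine space C^m: mutually inverse *)
(* polynomial maps  C^m -> A  and  A -> C^m  (the latter polynomial in the  *)
(* affine coordinates x_lam of the finite coordinates).                     *)
Definition affine_iso (C : numClosedFieldType) (I : finType) (A : pt C I -> Prop)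
  (m : nat) : Prop :=
  exists (P : I -> option {mpoly C[m]}) (Q : 'I_m -> {mpoly C[#|I|]}),
    let f := fun (v : 'I_m -> C) (i : I) => omap (fun p => p.@[v]) (P i) in
    let g := fun (x : pt C I) (j : 'I_m) =>
               (Q j).@[fun a => odflt 0 (x (enum_val a))] in
    [/\ (forall v, A (f v)),
        (forall v j, g (f v) j = v j) &
        (forall x, A x -> forall i, f (g x) i = x i)].

(* A point x of (P^1)^d lies in \bar h exactly when the set Psi of roots with
   finite coordinate is a flat (Psi = Phi \cap span Psi) and the finite
   coordinates are the values of the roots of Psi at some h.  Necessity: every
   linear relation \sum c_i lambda_i = 0 among positive roots gives the
   multihomogeneous equation \sum c_i x_{i,1} \prod_{j <> i} x_{j,0} = 0 on
   \bar h.  Sufficiency: x is the limit as s -> 0 of the points h + v/s, where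
   v kills span Psi but no other positive root, after rescaling the coordinates
   outside Psi by s.  A flat is the largest closed subsystem of its span, so the
   k-step good subsystems are exactly the flats of corank k.  Listing the flats
   by increasing rank, the union of the first n cells is cut out of \bar h by
   requiring, for each later flat, some infinite coordinate among its positive
   roots. *)

From Pilot Require Import Defs.
From HB Require Import structures.
From mathcomp Require Import all_boot all_order all_algebra.
From mathcomp Require Import mpoly.
From Stdlib Require Import FunctionalExtensionality.
Import Order.TTheory GRing.Theory Num.Theory.
Local Open Scope ring_scope.
Set Implicit Arguments. Unset Strict Implicit. Unset Printing Implicit Defensive.

Section Pairing.
Variables (C : numClosedFieldType) (r : nat).
Implicit Types (l h : 'rV[C]_r).

Lemma pairing_mx l h : pairing l h = (l *m h^T) 0 0.
Proof. by rewrite /pairing mxE; apply: eq_bigr => k _; rewrite mxE. Qed.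

Lemma pairingC l h : pairing l h = pairing h l.
Proof. by rewrite /pairing; apply: eq_bigr => k _; rewrite mulrC. Qed.

Lemma pairingDr l h h' : pairing l (h + h') = pairing l h + pairing l h'.
Proof. by rewrite !pairing_mx linearD mulmxDr mxE. Qed.

Lemma pairingZr l h c : pairing l (c *: h) = c * pairing l h.
Proof. by rewrite !pairing_mx linearZ -scalemxAr mxE. Qed.

Lemma pairingBr l h h' : pairing l (h - h') = pairing l h - pairing l h'.
Proof. by rewrite pairingDr -scaleN1r pairingZr mulN1r. Qed.

Lemma pairing0r l : pairing l 0 = 0.
Proof. by rewrite -(scale0r 0) pairingZr mul0r. Qed.

Lemma pairing_sumr (T : Type) (s : seq T) (P : pred T) l (F : T -> 'rV[C]_r) :
  pairing l (\sum_(t <- s | P t) F t) = \sum_(t <- s | P t) pairing l (F t).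
Proof.
elim/big_rec2: _ => [|t u h _ <-]; first exact: pairing0r.
by rewrite pairingDr.
Qed.

Lemma pairing_suml (T : Type) (s : seq T) (P : pred T) (F : T -> 'rV[C]_r) h :
  pairing (\sum_(t <- s | P t) F t) h = \sum_(t <- s | P t) pairing (F t) h.
Proof. by rewrite pairingC pairing_sumr; apply: eq_bigr => t _; rewrite pairingC. Qed.

Lemma pairingZl l h c : pairing (c *: l) h = c * pairing l h.
Proof. by rewrite pairingC pairingZr pairingC. Qed.

Lemma pairing0l h : pairing 0 h = 0.
Proof. by rewrite pairingC pairing0r. Qed.

Lemma pairing_row (u : 'rV[C]_r) n (X : 'M[C]_(n, r)) k :
  pairing u (row k X) = (u *m X^T) 0 k.
Proof. by rewrite /pairing mxE; apply: eq_bigr => j _; rewrite !mxE. Qed.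

Lemma exists_separating_covectors m (S : 'M[C]_(m, r)) (J : finType)
    (phi : J -> 'rV[C]_r) :
  exists w : J -> 'rV[C]_r,
    (forall b (u : 'rV_r), (u <= S)%MS -> pairing u (w b) = 0) /\
    (forall b, ~~ (phi b <= S)%MS -> pairing (phi b) (w b) != 0).
Proof.
pose K := cokermx S.
have pairing_col (u : 'rV_r) k : pairing u (col k K)^T = (u *m K) 0 k.
  by rewrite pairing_mx trmxK !mxE; apply: eq_bigr => j _; rewrite mxE.
exists (fun b => if [pick k | (phi b *m K) 0 k != 0] is Some k then (col k K)^T else 0).
split=> [b u|b]; case: pickP => [k phiKk|phiK0]; rewrite ?pairing0r //.
- by rewrite submxE pairing_col => /eqP ->; rewrite mxE.
- by rewrite pairing_col.
- case/negP; rewrite submxE; apply/eqP/rowP => k; rewrite [RHS]mxE.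
  exact/eqP/negbFE/phiK0.
Qed.

End Pairing.

Section Multihomogeneous.
Variables (C : numClosedFieldType) (I : finType).
Local Notation mpoly := {mpoly C[nvars I]}.

Definition xvar0 (i : I) : 'I_(nvars I) := lshift #|I| (enum_rank i).
Definition xvar1 (i : I) : 'I_(nvars I) := rshift #|I| (enum_rank i).

Definition coords (T : Type) (u0 u1 : I -> T) (k : 'I_(nvars I)) : T :=
  match split k with inl a => u0 (enum_val a) | inr a => u1 (enum_val a) end.

Lemma homcoordsE (x : pt C I) :
  homcoords x = coords (fun i => hc0 (x i)) (fun i => hc1 (x i)).
Proof. by []. Qed.

Lemma coords_xvar0 T (u0 u1 : I -> T) i : coords u0 u1 (xvar0 i) = u0 i.
Proof. by rewrite /coords /xvar0 (unsplitK (inl _)) enum_rankK. Qed.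

Lemma coords_xvar1 T (u0 u1 : I -> T) i : coords u0 u1 (xvar1 i) = u1 i.
Proof. by rewrite /coords /xvar1 (unsplitK (inr _)) enum_rankK. Qed.

Lemma coords_comp T T' (f : T -> T') (u0 u1 : I -> T) k :
  f (coords u0 u1 k) = coords (f \o u0) (f \o u1) k.
Proof. by rewrite /coords; case: (split k). Qed.

Lemma mhomog_eq e e' (p : mpoly) : mhomog e p -> e =1 e' -> mhomog e' p.
Proof. by move=> ep ee' m mp i; rewrite -ee' ep. Qed.

Lemma mhomog0 e : mhomog e (0 : mpoly).
Proof. by move=> m; rewrite msupp0. Qed.

Lemma mhomog1 : mhomog (fun _ => 0%N) (1 : mpoly).
Proof. by move=> m; rewrite msupp1 inE => /eqP -> i; rewrite !mnm0E. Qed.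

Lemma mhomogD e (p q : mpoly) : mhomog e p -> mhomog e q -> mhomog e (p + q).
Proof.
move=> pe qe m /msuppD_le; rewrite mem_cat => /orP[] mpq i; [exact: pe | exact: qe].
Qed.

Lemma mhomogZ e c (p : mpoly) : mhomog e p -> mhomog e (c *: p).
Proof. by move=> ep m /msuppZ_le; apply: ep. Qed.

Lemma mhomogM e1 e2 (p q : mpoly) : mhomog e1 p -> mhomog e2 q ->
  mhomog (fun i => e1 i + e2 i)%N (p * q).
Proof.
move=> pe qe m /msuppM_le /allpairsP[[m1 m2] /= [m1p m2q ->]] i.
by rewrite !mnmDE addnACA pe // qe.
Qed.

Lemma mhomog_sum (T : Type) (s : seq T) (P : pred T) e (F : T -> mpoly) :
  (forall t, P t -> mhomog e (F t)) -> mhomog e (\sum_(t <- s | P t) F t).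
Proof.
move=> eF; elim/big_rec: _ => [|t p Pt ep]; first exact: mhomog0.
by apply: mhomogD => //; apply: eF.
Qed.

Lemma mhomog_prod (T : Type) (s : seq T) (P : pred T) (e : T -> I -> nat)
    (F : T -> mpoly) :
  (forall t, P t -> mhomog (e t) (F t)) ->
  mhomog (fun i => \sum_(t <- s | P t) e t i)%N (\prod_(t <- s | P t) F t).
Proof.
move=> eF; elim: s => [|t s IHs].
  by rewrite big_nil; apply: (mhomog_eq mhomog1) => i; rewrite big_nil.
rewrite big_cons; case: ifP => Pt.
  by apply: (mhomog_eq (mhomogM (eF _ Pt) IHs)) => i; rewrite big_cons Pt.
by apply: (mhomog_eq IHs) => i; rewrite big_cons Pt.
Qed.

Lemma sum_nat_eq (P : pred I) i : (\sum_(j | P j) (i == j))%N = P i.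
Proof.
case Pi: (P i); last by rewrite big1 // => j Pj; case: eqP => // ij; rewrite ij Pj in Pi.
by rewrite (bigD1 i) //= eqxx big1 // => j /andP[_ /negbTE]; rewrite eq_sym => ->.
Qed.

Lemma mhomog_xvar0 i : mhomog (fun j => (j == i : nat)) ('X_(xvar0 i) : mpoly).
Proof.
move=> m; rewrite msuppX inE => /eqP -> j; rewrite !mnm1E /xvar0 eq_lrshift addn0.
by rewrite (inj_eq (@lshift_inj _ _)) (inj_eq enum_rank_inj) eq_sym.
Qed.

Lemma mhomog_xvar1 i : mhomog (fun j => (j == i : nat)) ('X_(xvar1 i) : mpoly).
Proof.
move=> m; rewrite msuppX inE => /eqP -> j; rewrite !mnm1E /xvar1 eq_rlshift add0n.
by rewrite (inj_eq (@rshift_inj _ _)) (inj_eq enum_rank_inj) eq_sym.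
Qed.

Lemma prod_nvars (F : 'I_(nvars I) -> C) :
  \prod_k F k = \prod_i (F (xvar0 i) * F (xvar1 i)).
Proof.
rewrite /nvars big_split_ord big_split /=.
by congr (_ * _); rewrite (big_enum_val (A := I)) /=; apply: eq_bigr => a _;
  rewrite /xvar0 /xvar1 enum_valK.
Qed.

Lemma meval_coords_scale e (p : mpoly) (c u0 u1 : I -> C) : mhomog e p ->
  p.@[coords (fun i => c i * u0 i) (fun i => c i * u1 i)] =
  (\prod_i c i ^+ e i) * p.@[coords u0 u1].
Proof.
move=> ep; rewrite !mevalE big_distrr; apply: eq_big_seq => m mp /=.
rewrite mulrCA; congr (_ * _); rewrite !prod_nvars -big_split /=.
apply: eq_bigr => i _; rewrite !coords_xvar0 !coords_xvar1 !exprMn -(ep m mp i) exprD.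
by rewrite mulrACA.
Qed.

Lemma eq_coords T (u0 u0' u1 u1' : I -> T) :
  u0 =1 u0' -> u1 =1 u1' -> coords u0 u1 =1 coords u0' u1'.
Proof. by move=> u00 u11 k; rewrite /coords; case: (split k). Qed.

Lemma meval_coords_scale_eq0 e (p : mpoly) (c u0 u1 : I -> C) :
  mhomog e p -> (forall i, c i != 0) ->
  (p.@[coords (fun i => c i * u0 i) (fun i => c i * u1 i)] == 0) =
  (p.@[coords u0 u1] == 0).
Proof.
move=> ep c_neq0; rewrite (meval_coords_scale _ _ _ ep) mulf_eq0 orb_idl // => c0.
by exfalso; move: c0; apply/negP/prodf_neq0 => i _; rewrite expf_neq0.
Qed.

End Multihomogeneous.

Section Curves.
Variable C : numClosedFieldType.

Lemma poly_eq0_nat_roots (q : {poly C}) :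
  (forall k, (k < size q)%N -> q.[k.+1%:R] = 0) -> q = 0.
Proof.
move=> q0; apply: (@roots_geq_poly_eq0 _ _ [seq k.+1%:R | k <- iota 0 (size q)]).
- by apply/allP => s /mapP[k]; rewrite mem_iota => /andP[_ kq] ->; apply/eqP/q0.
- by rewrite map_inj_uniq ?iota_uniq // => a b /eqP; rewrite eqr_nat => /eqP [].
- by rewrite size_map size_iota.
Qed.

Lemma exists_nonroot (q : {poly C}) : q != 0 -> exists s, q.[s] != 0.
Proof.
move=> q_neq0; have /existsP[k qk] : [exists k : 'I_(size q), q.[k.+1%:R] != 0].
  apply: contraNT q_neq0 => /existsPn qk0; apply/eqP/poly_eq0_nat_roots => k kq.
  exact/eqP/negbNE/(qk0 (Ordinal kq)).
by exists k.+1%:R.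
Qed.

Lemma meval_curve0 n (p : {mpoly C[n]}) (V : 'I_n -> {poly C}) :
  (forall s, s != 0 -> p.@[fun k => (V k).[s]] = 0) -> p.@[fun k => (V k).[0]] = 0.
Proof.
have horner_mmap s : (mmap polyC V p).[s] = p.@[fun k => (V k).[s]].
  rewrite /mmap mevalE horner_sum; apply: eq_bigr => m _.
  rewrite hornerM hornerC horner_prod; congr (_ * _).
  by apply: eq_bigr => i _; rewrite horner_exp.
move=> p0; rewrite -horner_mmap (poly_eq0_nat_roots (q := mmap polyC V p)) ?horner0 //.
by move=> k _; rewrite horner_mmap p0 // pnatr_eq0.
Qed.

Lemma exists_common_nonvanishing r (J : finType) (B : pred J) (phi w : J -> 'rV[C]_r) :
  (forall b, B b -> pairing (phi b) (w b) != 0) ->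
  exists t, forall b, B b -> pairing (phi b) (\sum_a t ^+ enum_rank a *: w a) != 0.
Proof.
(* As a polynomial in t, the pairing with phi b has the nonzero coefficient
   pairing (phi b) (w b) at 'X^(enum_rank b). *)
move=> phiw; pose q b := \sum_a (pairing (phi b) (w a))%:P * 'X^(enum_rank a).
have qE b t : (q b).[t] = pairing (phi b) (\sum_a t ^+ enum_rank a *: w a).
  rewrite pairing_sumr horner_sum; apply: eq_bigr => a _.
  by rewrite hornerM hornerC hornerXn pairingZr mulrC.
have q_neq0 b : B b -> q b != 0.
  move=> Bb; apply: contraTneq (phiw b Bb) => qb0; rewrite negbK; apply/eqP.
  have := congr1 (fun p : {poly C} => p`_(enum_rank b)) qb0.
  rewrite /= coef0 coef_sum (bigD1 b) //= coefCM coefXn eqxx mulr1 big1 ?addr0 //.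
  move=> a ab; rewrite coefCM coefXn (inj_eq val_inj) (inj_eq enum_rank_inj).
  by rewrite eq_sym (negbTE ab) mulr0.
have [t] := exists_nonroot (introT (prodf_neq0 B q) q_neq0).
by rewrite horner_prod => /prodf_neq0 qt; exists t => b Bb; rewrite -qE qt.
Qed.

End Curves.

Section Flats.
Variables (C : numClosedFieldType) (r : nat) (I : finType) (pos cor : I -> 'rV[C]_r).
Local Notation root := (Defs.root pos).
Local Notation rk := (rk pos).
Implicit Types (Psi Theta : {set rootidx I}) (S : 'M[C]_r).

Definition span Psi : 'M[C]_r := (\sum_(j in Psi) <<root j>>)%MS.
Definition flatof S : {set rootidx I} := [set j | (root j <= S)%MS].
Definition flat Psi := Psi = flatof (span Psi).

Lemma rkE Psi : rk Psi = \rank (span Psi). Proof. by []. Qed.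

Lemma sub_span Psi j : j \in Psi -> (root j <= span Psi)%MS.
Proof. by move=> jPsi; apply: (sumsmx_sup j) => //; rewrite genmxE. Qed.

Lemma span_sub Psi m (S : 'M_(m, r)) :
  (forall j, j \in Psi -> (root j <= S)%MS) -> (span Psi <= S)%MS.
Proof. by move=> PsiS; apply/sumsmx_subP => j /PsiS; rewrite genmxE. Qed.

Lemma span_subset Psi Theta : Psi \subset Theta -> (span Psi <= span Theta)%MS.
Proof. by move=> /subsetP PsiTheta; apply: span_sub => j /PsiTheta /sub_span. Qed.

Lemma root_flip (j : rootidx I) : root (~~ j.1, j.2) = - root j.
Proof. by case: j => [[] i]; rewrite /Defs.root /= ?opprK. Qed.

Lemma pos_submxE m (S : 'M_(m, r)) (j : rootidx I) :
  (pos j.2 <= S)%MS = (root j <= S)%MS.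
Proof. by case: j => [[] i]; rewrite /Defs.root //= (eqmx_opp (pos i)). Qed.

Lemma span_flatof S : (span (flatof S) <= S)%MS.
Proof. by apply: span_sub => j; rewrite inE. Qed.

Lemma flatof_flat S : flat (flatof S).
Proof.
apply/setP => j; rewrite [RHS]inE; apply/idP/idP; first exact: sub_span.
by move=> /submx_trans /(_ (span_flatof S)); rewrite inE.
Qed.

Lemma flatof_closed S : closed_subsystem pos cor (flatof S).
Proof.
split; first split.
- by move=> j; rewrite !inE root_flip (eqmx_opp (root j)).
- move=> a b c; rewrite !inE => aS bS ->; rewrite /refl.
  by rewrite addmx_sub // (eqmx_opp (_ *: _)) scalemx_sub // pos_submxE.
- by move=> a b c; rewrite !inE => aS bS <-; apply: addmx_sub.
Qed.

Lemma flat_closed Psi : flat Psi -> closed_subsystem pos cor Psi.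
Proof. by move=> ->; apply: flatof_closed. Qed.

Lemma flat_flip Psi (j : rootidx I) : flat Psi -> ((~~ j.1, j.2) \in Psi) = (j \in Psi).
Proof. by move=> ->; rewrite !inE root_flip (eqmx_opp (root j)). Qed.

Lemma flat_maximal Psi Theta :
  flat Psi -> Psi \subset Theta -> rk Theta = rk Psi -> Theta = Psi.
Proof.
move=> flatPsi PsiTheta rkTheta; apply/eqP; rewrite eqEsubset PsiTheta andbT.
have ThetaPsi : (span Theta <= span Psi)%MS.
  by rewrite -(mxrank_leqif_sup (span_subset PsiTheta)) -!rkE rkTheta.
by apply/subsetP => j /sub_span jTheta; rewrite flatPsi inE (submx_trans jTheta).
Qed.

Lemma good_flat Theta Psi : flat Theta -> good pos cor Theta Psi -> flat Psi.
Proof.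
move=> flatTheta [closedPsi PsiTheta rkPsi maxPsi].
have PsiPsi' : Psi \subset flatof (span Psi).
  by apply/subsetP => j jPsi; rewrite inE sub_span.
have spanPsi' : (span (flatof (span Psi)) :=: span Psi)%MS.
  by apply/eqmxP; rewrite span_flatof span_subset.
symmetry; apply: maxPsi => //; first exact: flatof_closed.
- apply/subsetP => k; rewrite inE => kPsi; rewrite flatTheta inE.
  exact: submx_trans kPsi (span_subset PsiTheta).
- by rewrite rkE spanPsi'.
Qed.

Lemma flat_good Theta Psi :
  flat Psi -> Psi \subset Theta -> (rk Psi).+1 = rk Theta -> good pos cor Theta Psi.
Proof.
move=> flatPsi PsiTheta rkPsi; split=> // [|Psi' _ _ rkPsi' PsiPsi'].
  exact: flat_closed.
by apply: flat_maximal => //; apply: succn_inj; rewrite rkPsi'.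
Qed.

Lemma flat_extend Psi j : flat Psi -> j \notin Psi ->
  exists Theta, [/\ flat Theta, Psi \subset Theta & rk Theta = (rk Psi).+1].
Proof.
move=> flatPsi jPsi; set S := (span Psi + root j)%MS.
have PsiTheta : Psi \subset flatof S.
  by apply/subsetP => k /sub_span kPsi; rewrite inE (submx_trans kPsi) ?addsmxSl.
have spanTheta : (span (flatof S) :=: S)%MS.
  apply/eqmxP; rewrite span_flatof addsmx_sub span_subset //=.
  by rewrite sub_span // inE addsmxSr.
have jS : ~~ (root j <= span Psi)%MS by rewrite flatPsi inE in jPsi.
exists (flatof S); split=> //; first exact: flatof_flat.
rewrite rkE spanTheta.
apply/eqP; rewrite eqn_leq; apply/andP; split.
  have [rkS _] := mxrank_adds_leqif (span Psi) (root j).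
  by rewrite (leq_trans rkS) // -rkE -[(rk Psi).+1]addn1 leq_add2l rank_leq_row.
apply: rank_ltmx; rewrite ltmxE addsmxSl /=.
by apply: contra jS; apply: submx_trans (addsmxSr _ _).
Qed.

Hypothesis rank_roots : \rank (\sum_(j : rootidx I) <<root j>>)%MS = r.

Lemma rk_setT : rk setT = r.
Proof. by rewrite -[RHS]rank_roots rkE /span; under eq_bigl do rewrite inE. Qed.

Lemma flat_setT : flat setT.
Proof.
apply/setP => j; rewrite !inE; apply/esym/submx_full.
by rewrite /row_full -rkE rk_setT.
Qed.

Lemma kstep_good_flat k Psi : kstep_good pos cor k Psi -> flat Psi /\ (rk Psi + k)%N = r.
Proof.
elim=> [|{}k Theta {}Psi _ [flatTheta rkTheta] goodPsi].
  by rewrite addn0 rk_setT; split=> //; exact: flat_setT.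
split; first exact: good_flat goodPsi.
by case: goodPsi => _ _ rkPsi _; rewrite addnS -addSn rkPsi.
Qed.

Lemma flat_kstep_good n Psi : flat Psi -> (rk Psi + n)%N = r -> kstep_good pos cor n Psi.
Proof.
elim: n Psi => [|n IHn] Psi flatPsi rkPsi.
  have -> : Psi = setT.
    apply: esym (flat_maximal flatPsi (subsetT Psi) _).
    by rewrite rk_setT -[LHS]rkPsi addn0.
  exact: kstep0.
have /subsetPn[j _ jPsi] : ~~ (setT \subset Psi).
  apply/negP => TPsi; have PsiT : Psi = setT by apply/eqP; rewrite eqEsubset subsetT.
  by move: rkPsi; rewrite PsiT rk_setT => /eqP; rewrite -{2}[r]addn0 eqn_add2l.
have [Theta [flatTheta PsiTheta rkTheta]] := flat_extend flatPsi jPsi.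
apply: kstepS (flat_good flatPsi PsiTheta (esym rkTheta)).
by apply: IHn; rewrite // rkTheta addSn -addnS.
Qed.

Lemma kstep_goodP Psi : (exists k, kstep_good pos cor k Psi) <-> flat Psi.
Proof.
split=> [[k /kstep_good_flat[]] //|flatPsi].
by exists (r - rk Psi)%N; apply: flat_kstep_good; rewrite ?subnKC ?rank_leq_col.
Qed.

End Flats.

Section RootMatrix.
Variables (C : numClosedFieldType) (r : nat) (I : finType) (pos : I -> 'rV[C]_r).
Implicit Types (F : {set I}) (Psi : {set rootidx I}).

Definition posroots Psi : {set I} := [set i | (true, i) \in Psi].

Definition posmx F : 'M[C]_(#|I|, r) :=
  \matrix_(a, k) (if enum_val a \in F then pos (enum_val a) 0 k else 0).

Lemma row_posmx F a :
  row a (posmx F) = if enum_val a \in F then pos (enum_val a) else 0.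
Proof. by apply/rowP => k; rewrite !mxE; case: ifP; rewrite ?mxE. Qed.

Lemma mul_posmx F (d : 'rV[C]_#|I|) :
  d *m posmx F = \sum_(i in F) d 0 (enum_rank i) *: pos i.
Proof.
rewrite mulmx_sum_row [RHS]big_mkcond [RHS](big_enum_val (A := I)) /=.
by apply: eq_bigr => a _; rewrite row_posmx enum_valK; case: ifP; rewrite ?scaler0.
Qed.

Lemma mul_posmx_tr F (h : 'rV[C]_r) i :
  i \in F -> (h *m (posmx F)^T) 0 (enum_rank i) = pairing (pos i) h.
Proof.
move=> iF; rewrite pairingC pairing_mx !mxE; apply: eq_bigr => k _.
by rewrite !mxE enum_rankK iF.
Qed.

Lemma span_posmx Psi : (forall j, ((~~ j.1, j.2) \in Psi) = (j \in Psi)) ->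
  (span pos Psi :=: posmx (posroots Psi))%MS.
Proof.
move=> Psi_flip; apply/eqmxP/andP; split.
  apply: span_sub => j jPsi; rewrite -pos_submxE.
  have jpos : j.2 \in posroots Psi.
    by case: j jPsi => [[] i] jPsi; rewrite inE //; have /= -> := Psi_flip (false, i).
  have := row_sub (enum_rank j.2) (posmx (posroots Psi)).
  by rewrite row_posmx enum_rankK jpos.
apply/row_subP => a; rewrite row_posmx; case: ifP => [|_]; last exact: sub0mx.
by rewrite inE => aPsi; rewrite (pos_submxE _ _ (true, _)) sub_span.
Qed.

Lemma submx_posmxP F (v : 'rV[C]_r) :
  (v <= posmx F)%MS -> exists d : I -> C, v = \sum_(i in F) d i *: pos i.
Proof. by case/submxP => D ->; exists (fun i => D 0 (enum_rank i)); rewrite mul_posmx. Qed.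

Lemma exists_pairing_interpolant F (v : I -> C) :
  (forall c, \sum_(i in F) c i *: pos i = 0 -> \sum_(i in F) c i * v i = 0) ->
  exists h, forall i, i \in F -> v i = pairing (pos i) h.
Proof.
(* The values v are killed by every relation among the rows of posmx F, so
   they lie in the row space of (posmx F)^T. *)
move=> vrel; pose K := cokermx (posmx F)^T.
pose vF : 'rV[C]_#|I| := \row_a (if enum_val a \in F then v (enum_val a) else 0).
have /submxP[h vFh] : (vF <= (posmx F)^T)%MS.
  rewrite submxE; apply/eqP/rowP => k; rewrite [RHS]mxE.
  have posK : \sum_(i in F) K (enum_rank i) k *: pos i = 0.
    have := congr1 (row k \o trmx) (mulmx_coker (posmx F)^T); rewrite /= trmx_mul trmxK.
    rewrite row_mul mul_posmx trmx0 row0 => posK0; apply: etrans _ posK0.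
    by apply: eq_bigr => i _; rewrite !mxE.
  rewrite -(vrel _ posK) mxE [RHS]big_mkcond [RHS](big_enum_val (A := I)) /=.
  by apply: eq_bigr => a _; rewrite mxE enum_valK; case: ifP; rewrite ?mul0r // mulrC.
by exists h => i iF; rewrite -(mul_posmx_tr _ iF) -vFh mxE enum_rankK iF.
Qed.

End RootMatrix.

Section HbarPoints.
Variables (C : numClosedFieldType) (r : nat) (I : finType) (pos : I -> 'rV[C]_r).
Implicit Types (x : pt C I) (F : {set I}) (Psi : {set rootidx I}).

Definition fincoords x : {set I} := [set i | x i != None].
Definition finroots x : {set rootidx I} := [set j | j.2 \in fincoords x].

Definition relpoly F (c : I -> C) : {mpoly C[nvars I]} :=
  \sum_(i in F) c i *: ('X_(xvar1 i) * \prod_(j in F | j != i) 'X_(xvar0 j)).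

Lemma relpoly_mhomog F c : mhomog (fun k => (k \in F : nat)) (relpoly F c).
Proof.
apply: mhomog_sum => i iF; apply: mhomogZ.
have Xprod := mhomog_prod (s := index_enum I) (P := fun j => (j \in F) && (j != i))
  (fun j _ => @mhomog_xvar0 C I j).
apply: (mhomog_eq (mhomogM (@mhomog_xvar1 C I i) Xprod)) => k /=.
by rewrite sum_nat_eq; case: eqVneq => [->|]; rewrite ?iF ?andbT.
Qed.

Lemma relpoly_homcoords F c x : (relpoly F c).@[homcoords x] =
  \sum_(i in F) c i * (hc1 (x i) * \prod_(j in F | j != i) hc0 (x j)).
Proof.
rewrite homcoordsE /relpoly raddf_sum /=; apply: eq_bigr => i _.
rewrite mevalZ mevalM mevalXU coords_xvar1 rmorph_prod /=.
by under eq_bigr do rewrite mevalXU coords_xvar0.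
Qed.

Lemma hbar_relation x F (c : I -> C) : hbar pos x -> \sum_(i in F) c i *: pos i = 0 ->
  \sum_(i in F) c i * (hc1 (x i) * \prod_(j in F | j != i) hc0 (x j)) = 0.
Proof.
move=> xhbar posc; rewrite -relpoly_homcoords.
apply: (xhbar _ _ (@relpoly_mhomog F c)).
move=> _ [h ->]; rewrite /vanish relpoly_homcoords -[RHS](pairing0l h) -posc.
by rewrite pairing_suml; apply: eq_bigr => i _; rewrite big1 // mulr1 pairingZl.
Qed.

Lemma hbar_relation_fin x F c : hbar pos x -> F \subset fincoords x ->
  \sum_(i in F) c i *: pos i = 0 -> \sum_(i in F) c i * odflt 0 (x i) = 0.
Proof.
move=> xhbar /subsetP Ffin posc; apply: etrans _ (hbar_relation xhbar posc).
have Fsome i : i \in F -> exists v, x i = Some v.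
  by move=> /Ffin; rewrite inE; case: (x i) => // v _; exists v.
by apply: eq_bigr => i /Fsome[v ->]; rewrite big1 ?mulr1 // => j /andP[/Fsome[w ->]].
Qed.

Lemma hbar_relation_inf x F (d : I -> C) l : hbar pos x -> x l = None ->
  F \subset fincoords x -> pos l <> \sum_(i in F) d i *: pos i.
Proof.
(* In the equation of the relation pos l = \sum d_i pos i only the term of l
   survives, as x_{l,0} = 0 and x_{l,1} = 1. *)
move=> xhbar xl /subsetP Ffin posl.
have lF : l \notin F by apply/negP => /Ffin; rewrite inE xl.
pose c i := if i == l then -1 else d i.
have posc : \sum_(i in l |: F) c i *: pos i = 0.
  rewrite big_setU1 //= /c eqxx scaleN1r posl addrC; apply/eqP; rewrite subr_eq0.
  by apply/eqP/eq_bigr => i iF; rewrite ifN //; apply: contraNneq lF => <-.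
have := hbar_relation xhbar posc; rewrite big_setU1 //= /c eqxx xl /=.
rewrite big1 => [|j /andP[]]; last first.
  by rewrite in_setU1 => /orP[/eqP->|/Ffin]; rewrite ?eqxx // inE; case: (x j).
rewrite [X in _ + X]big1 => [|i iF].
  by move/eqP; rewrite !mulr1 addr0 oppr_eq0 oner_eq0.
rewrite (bigD1 l) /= ?xl ?mul0r ?mulr0 //.
by rewrite setU11; apply: contraNneq lF => ->.
Qed.

Lemma finroots_flip x (j : rootidx I) : ((~~ j.1, j.2) \in finroots x) = (j \in finroots x).
Proof. by rewrite !inE. Qed.

Lemma posroots_finroots x : posroots (finroots x) = fincoords x.
Proof. by apply/setP => i; rewrite !inE. Qed.

Lemma hbar_finroots_flat x : hbar pos x -> flat pos (finroots x).
Proof.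
move=> xhbar; apply/setP => j; rewrite [RHS]inE; apply/idP/idP; first exact: sub_span.
rewrite -pos_submxE (span_posmx pos (finroots_flip x)) posroots_finroots.
move=> /submx_posmxP[d posj]; rewrite !inE; apply/negP => /eqP xj.
exact: hbar_relation_inf xhbar xj (subxx _) posj.
Qed.

Lemma hbar_cell x : hbar pos x -> Cring pos (finroots x) x.
Proof.
move=> xhbar; split=> [i|]; first by rewrite !inE negbK => /eqP.
have [h xh] := exists_pairing_interpolant (pos := pos) (F := fincoords x)
  (v := fun i => odflt 0 (x i)) (fun c => hbar_relation_fin xhbar (subxx _)).
by exists h => i; rewrite !inE => xi; rewrite -xh ?inE //; case: (x i) xi.
Qed.

Lemma cell_finroots Psi x : flat pos Psi -> Cring pos Psi x -> Psi = finroots x.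
Proof.
move=> flatPsi [xinf [h xfin]]; apply/setP => -[b i]; rewrite !inE /=.
have -> : ((b, i) \in Psi) = ((true, i) \in Psi).
  by case: b; rewrite // -(flat_flip (true, i) flatPsi).
by have [/xfin|/xinf] := boolP ((true, i) \in Psi) => ->.
Qed.

End HbarPoints.

Section CellClosure.
Variables (C : numClosedFieldType) (r : nat) (I : finType) (pos : I -> 'rV[C]_r).
Implicit Types (x : pt C I) (Psi : {set rootidx I}).

Lemma exists_cell_normal Psi : flat pos Psi ->
  exists v, (forall i, (true, i) \in Psi -> pairing (pos i) v = 0) /\
            (forall i, (true, i) \notin Psi -> pairing (pos i) v != 0).
Proof.
move=> flatPsi; have [w [wPsi wpos]] := exists_separating_covectors (span pos Psi) pos.
have posPsi i : (pos i <= span pos Psi)%MS = ((true, i) \in Psi).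
  by rewrite (pos_submxE _ _ (true, i)) {2}flatPsi inE.
have wnPsi i : (true, i) \notin Psi -> pairing (pos i) (w i) != 0.
  by rewrite -posPsi; apply: wpos.
have [t wt] := exists_common_nonvanishing wnPsi.
exists (\sum_a t ^+ enum_rank a *: w a); split=> // i iPsi.
by rewrite pairing_sumr big1 // => a _; rewrite pairingZr wPsi ?mulr0 ?posPsi.
Qed.

Lemma cell_sub_hbar Psi x : flat pos Psi -> Cring pos Psi x -> hbar pos x.
Proof.
move=> flatPsi [xinf [h0 xfin]] e p ep pvan.
have [v [vPsi vnPsi]] := exists_cell_normal flatPsi.
(* After rescaling the coordinates outside Psi by s, emb (h0 + v/s) is the
   value at s of the polynomial curve (cX, V1); its value at 0 is a rescaling
   of x. *)
pose cX i : {poly C} := if (true, i) \in Psi then 1 else 'X.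
pose V1 i := cX i * (pairing (pos i) h0)%:P + (pairing (pos i) v)%:P.
have curve s : s != 0 -> p.@[fun k => (coords cX V1 k).[s]] = 0.
  move=> s_neq0; pose c i := if (true, i) \in Psi then 1 else s.
  pose y := emb pos (h0 + s^-1 *: v).
  apply/eqP; rewrite (meval_eq _ (coords_comp (horner^~ s) cX V1)).
  rewrite (meval_eq _ (@eq_coords _ _ _ (fun i => c i * hc0 (y i)) _
                                        (fun i => c i * hc1 (y i)) _ _)).
  - rewrite (meval_coords_scale_eq0 _ _ ep) -?homcoordsE.
      by apply/eqP/pvan; exists (h0 + s^-1 *: v).
    by move=> i; rewrite /c; case: ifP; rewrite ?oner_eq0.
  - by move=> i; rewrite /= /cX /c; case: ifP; rewrite !hornerE.
  - move=> i; rewrite /= /V1 /cX /c /y /emb /= pairingDr pairingZr.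
    case: ifP => iPsi; rewrite !hornerE.
      by rewrite vPsi // mulr0.
    by rewrite mulrDr mulrA mulfV // mul1r.
have := meval_curve0 curve; pose c i := if (true, i) \in Psi then 1 else pairing (pos i) v.
rewrite (meval_eq _ (coords_comp (horner^~ 0) cX V1)).
rewrite (meval_eq _ (@eq_coords _ _ _ (fun i => c i * hc0 (x i)) _
                                      (fun i => c i * hc1 (x i)) _ _)).
- move=> /eqP; rewrite (meval_coords_scale_eq0 _ _ ep) -?homcoordsE; first by move/eqP.
  by move=> i; rewrite /c; case: ifP => [_|/negbT/vnPsi //]; rewrite oner_eq0.
- by move=> i; rewrite /= /cX /c; case: ifP => [/xfin ->|/negbT/xinf ->]; rewrite !hornerE.
- move=> i; rewrite /= /V1 /cX /c; case: ifP => [iPsi|/negbT/xinf ->]; rewrite !hornerE //.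
  by rewrite vPsi // xfin //= addr0.
Qed.

End CellClosure.

Section AffineCells.
Variables (C : numClosedFieldType) (r : nat) (I : finType) (pos : I -> 'rV[C]_r).
Implicit Types (Psi : {set rootidx I}).

Lemma exists_dual_root_basis Psi : flat pos Psi ->
  exists (b : 'I_(rk pos Psi) -> I) (H : 'I_(rk pos Psi) -> 'rV[C]_r),
  [/\ forall k, (true, b k) \in Psi,
      forall j k, pairing (pos (b j)) (H k) = (j == k)%:R &
      forall i, (true, i) \in Psi -> pos i = \sum_k pairing (pos i) (H k) *: pos (b k)].
Proof.
move=> flatPsi; pose M := posmx pos (posroots Psi).
have eqM : (M :=: span pos Psi)%MS.
  exact: eqmx_sym (span_posmx pos (fun j => flat_flip j flatPsi)).
have -> : rk pos Psi = \rank M by rewrite rkE eqM.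
pose f := maxrankfun M; pose B := rowsub f M.
have [X BX] : exists X, B *m X^T = 1%:M.
  have /row_fullP[X XB] : row_full B^T.
    by rewrite /row_full mxrank_tr; exact: maxrowsub_free.
  by exists X; rewrite -[B]trmxK -trmx_mul XB trmx1.
have rowB j : row j B = row (f j) M by apply/rowP => k; rewrite !mxE.
have fPsi j : enum_val (f j) \in posroots Psi.
  apply: contraT => fj; have := congr1 (row j) BX.
  rewrite row_mul rowB row_posmx (negbTE fj) mul0mx => /rowP/(_ j).
  by rewrite !mxE eqxx => /eqP; rewrite eq_sym oner_eq0.
have posB j : pos (enum_val (f j)) = row j B by rewrite rowB row_posmx fPsi.
exists (fun j => enum_val (f j)), (fun k => row k X); split.
- by move=> j; have := fPsi j; rewrite inE.
- by move=> j k; rewrite pairing_row posB -row_mul BX !mxE.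
move=> i iPsi; have /submxP[c posic] : (pos i <= B)%MS.
  by rewrite eq_maxrowsub eqM (pos_submxE _ _ (true, i)) sub_span.
have posiX : pos i *m X^T = c by rewrite posic -mulmxA BX mulmx1.
rewrite {1}posic mulmx_sum_row; apply: eq_bigr => k _.
by rewrite pairing_row posiX posB.
Qed.

Lemma cell_affine_iso Psi : flat pos Psi -> affine_iso (Cring pos Psi) (rk pos Psi).
Proof.
move=> flatPsi; have [b [H [bPsi bH posb]]] := exists_dual_root_basis flatPsi.
have eval_lin (v : 'I_(rk pos Psi) -> C) i :
    (\sum_k pairing (pos i) (H k) *: 'X_k).@[v] = pairing (pos i) (\sum_k v k *: H k).
  rewrite raddf_sum pairing_sumr /=; apply: eq_bigr => k _.
  by rewrite mevalZ mevalXU pairingZr mulrC.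
exists (fun i => if (true, i) \in Psi then Some (\sum_k pairing (pos i) (H k) *: 'X_k)
                 else None).
exists (fun j => 'X_(enum_rank (b j))).
split.
- move=> v; split=> [i /negbTE -> //|].
  by exists (\sum_k v k *: H k) => i iPsi /=; rewrite iPsi /= eval_lin.
- move=> v j /=; rewrite mevalXU enum_rankK bPsi /= eval_lin pairing_sumr.
  rewrite (bigD1 j) //= big1 => [|k kj]; first by rewrite pairingZr bH eqxx mulr1 addr0.
  by rewrite pairingZr bH eq_sym (negbTE kj) mulr0.
- move=> x [xinf [h xfin]] i /=; case: ifP => iPsi; last by rewrite xinf ?iPsi.
  rewrite xfin //= eval_lin [in RHS](posb i iPsi) pairing_sumr pairing_suml.
  congr Some; apply: eq_bigr => k _.
  by rewrite mevalXU enum_rankK xfin //= pairingZr pairingZl mulrC.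
Qed.

End AffineCells.

Section Action.
Variables (C : numClosedFieldType) (r : nat) (I : finType) (pos : I -> 'rV[C]_r).
Implicit Types (x : pt C I) (Psi : {set rootidx I}).

Lemma act_emb y h : act pos y (emb pos h) = emb pos (h + y).
Proof. by apply: functional_extensionality => i; rewrite /act /emb /= pairingDr. Qed.

Lemma act0 x : act pos 0 x = x.
Proof.
apply: functional_extensionality => i; rewrite /act; case: (x i) => //= c.
by rewrite pairing0r addr0.
Qed.

Lemma actD y z x : act pos (y + z) x = act pos y (act pos z x).
Proof.
apply: functional_extensionality => i; rewrite /act; case: (x i) => //= c.
by rewrite pairingDr addrA addrAC.
Qed.

Lemma act_cell Psi y x : Cring pos Psi x -> Cring pos Psi (act pos y x).
Proof.
case=> xinf [h xfin]; split=> [i /xinf|]; first by rewrite /act => ->.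
by exists (h + y) => i /xfin; rewrite /act pairingDr => ->.
Qed.

Lemma cell_orbit Psi x z : Cring pos Psi x -> Cring pos Psi z -> exists y, z = act pos y x.
Proof.
case=> xinf [h xfin] [zinf [h' zfin]]; exists (h' - h).
apply: functional_extensionality => i; rewrite /act.
have [iPsi|iPsi] := boolP ((true, i) \in Psi); last by rewrite xinf // zinf.
by rewrite xfin // zfin //= pairingBr addrC subrK.
Qed.

Lemma cell_nonempty Psi : exists x, Cring pos Psi x.
Proof.
exists (fun i => if (true, i) \in Psi then Some 0 else None).
by split=> [i /negbTE -> //|]; exists 0 => i ->; rewrite pairing0r.
Qed.

Lemma cell_setT x : Cring pos setT x <-> exists h, x = emb pos h.
Proof.
split=> [[_ [h xfin]]|[h ->]]; last by split=> [i|]; [rewrite in_setT | exists h].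
by exists h; apply: functional_extensionality => i; rewrite xfin ?in_setT.
Qed.

End Action.

Section Zclosed.
Variables (C : numClosedFieldType) (r : nat) (I : finType) (pos : I -> 'rV[C]_r).
Implicit Types (A B : pt C I -> Prop).

Lemma zclosed_ext A B : zclosed A -> (forall x, A x <-> B x) -> zclosed B.
Proof.
move=> [F [Fhomog AF]] AB; exists F; split=> // x.
by rewrite -AF; split=> /AB.
Qed.

Lemma zclosedT : zclosed (fun _ : pt C I => True).
Proof. by exists (fun _ _ => False); split=> // x. Qed.

Lemma zclosedI A B : zclosed A -> zclosed B -> zclosed (fun x => A x /\ B x).
Proof.
move=> [F [Fhomog AF]] [G [Ghomog BG]].
exists (fun e p => F e p \/ G e p); split=> [e p [/Fhomog|/Ghomog] //|x].
split=> [[Ax Bx] e p [Fep|Gep]|xFG].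
- by move/AF: Ax => /(_ e p Fep).
- by move/BG: Bx => /(_ e p Gep).
- by split; [apply/AF | apply/BG] => e p epFG; apply: (xFG e); [left|right].
Qed.

Lemma zclosed_all (T : eqType) (s : seq T) (A : T -> pt C I -> Prop) :
  (forall t, zclosed (A t)) -> zclosed (fun x => forall t, t \in s -> A t x).
Proof.
move=> Aclosed; elim: s => [|t s IHs].
  by apply: (zclosed_ext zclosedT) => x; split.
apply: (zclosed_ext (zclosedI (Aclosed t) IHs)) => x.
split=> [[xt xs] u|xts]; first by rewrite inE => /orP[/eqP ->|/xs].
by split=> [|u us]; apply: xts; rewrite inE ?eqxx ?us ?orbT.
Qed.

Lemma zclosed_hbar : zclosed (hbar pos).
Proof.
exists (fun e p => mhomog e p /\ forall y, (exists h, y = emb pos h) -> vanish p y).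
split=> [e p [] //|x]; split=> [xhbar e p [ep pvan]|xvan e p ep pvan].
  exact: xhbar e p ep pvan.
exact: xvan e p (conj ep pvan).
Qed.

Lemma zclosed_some_infinite (F : {set I}) :
  zclosed (fun x : pt C I => ~~ (F \subset fincoords x)).
Proof.
exists (fun e p => e = (fun i => (i \in F : nat)) /\ p = \prod_(i in F) 'X_(xvar0 i)).
split=> [e p [-> ->]|x].
  apply: (mhomog_eq (mhomog_prod (P := fun i => i \in F)
    (fun i _ => @mhomog_xvar0 C I i))) => i.
  exact: sum_nat_eq.
have prodE : (\prod_(i in F) 'X_(xvar0 i)).@[homcoords x] = \prod_(i in F) hc0 (x i).
  rewrite rmorph_prod /=; apply: eq_bigr => i _.
  by rewrite mevalXU homcoordsE coords_xvar0.
split=> [/subsetPn[i iF ifin] e p [_ ->]|xvan].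
  rewrite /vanish prodE (bigD1 i) //=.
  by move: ifin; rewrite inE negbK => /eqP ->; rewrite mul0r.
apply/subsetPn; have := xvan _ _ (conj erefl erefl); rewrite /vanish prodE.
move/eqP; rewrite prodf_seq_eq0 => /hasP[i _] /andP[iF xi0].
by exists i => //; rewrite inE; move: xi0; case: (x i) => //=; rewrite oner_eq0.
Qed.

End Zclosed.

Section Decomposition.
Variables (C : numClosedFieldType) (r : nat) (I : finType) (pos cor : I -> 'rV[C]_r).
Implicit Types (x : pt C I) (Psi : {set rootidx I}).

Lemma hbar_act y x : hbar pos x -> hbar pos (act pos y x).
Proof.
move=> xhbar; apply: (cell_sub_hbar (hbar_finroots_flat xhbar)).
exact/act_cell/hbar_cell.
Qed.

Lemma cell_setT_open :
  exists A, zclosed A /\ forall x, hbar pos x -> (Cring pos setT x <-> ~ A x).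
Proof.
exists (fun x : pt C I => ~~ ([set: I] \subset fincoords x)); split.
  exact: zclosed_some_infinite.
move=> x xhbar; split=> [[_ [h xfin]]|/negP/negbNE/subsetP xfin].
  by apply/negP/negPn/subsetP => i _; rewrite inE xfin ?in_setT.
suff <- : finroots x = setT by exact: hbar_cell.
by apply/setP => j; rewrite in_setT inE xfin ?in_setT.
Qed.

Lemma initial_cellsE (s : seq {set rootidx I}) n x :
  uniq s -> (forall Psi, Psi \in s <-> flat pos Psi) ->
  sorted (fun A B => rk pos A <= rk pos B)%N s ->
  (exists Psi, Psi \in take n s /\ Cring pos Psi x) <->
  hbar pos x /\ (forall G, G \in drop n s -> ~~ (posroots G \subset fincoords x)).
Proof.
move=> s_uniq s_flat s_sorted.
have rk_le A B : A \in take n s -> B \in drop n s -> (rk pos A <= rk pos B)%N.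
  move: s_sorted; rewrite sorted_pairwise; last by move=> ? ? ?; apply: leq_trans.
  rewrite -[s in pairwise _ s](cat_take_drop n) pairwise_cat.
  by case/and3P => /allrelP + _ _; apply.
have take_drop G : G \in drop n s -> G \notin take n s.
  move: s_uniq; rewrite -[s in uniq s](cat_take_drop n) cat_uniq.
  by case/and3P => _ /hasPn + _; apply.
split=> [[Psi [Psi_take xPsi]]|[xhbar xdrop]].
  have flatPsi : flat pos Psi by apply/s_flat/(mem_take Psi_take).
  split=> [|G G_drop]; first exact: cell_sub_hbar flatPsi xPsi.
  apply/negP => /subsetP Gfin; have flatG : flat pos G by apply/s_flat/(mem_drop G_drop).
  have GPsi : G \subset Psi.
    rewrite (cell_finroots flatPsi xPsi); apply/subsetP => -[b i] jG; rewrite inE /=.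
    apply: Gfin; rewrite inE; case: b jG => // jG.
    by have /= -> := flat_flip (false, i) flatG.
  have rkG : rk pos Psi = rk pos G.
    by apply/eqP; rewrite eqn_leq rk_le //= !rkE mxrankS // span_subset.
  by move: (take_drop _ G_drop); rewrite -(flat_maximal flatG GPsi rkG) Psi_take.
have : finroots x \in take n s ++ drop n s.
  by rewrite cat_take_drop; apply/s_flat/hbar_finroots_flat.
rewrite mem_cat => /orP[x_take|/xdrop].
  by exists (finroots x); split=> //; exact: hbar_cell.
by rewrite posroots_finroots subxx.
Qed.

Hypothesis rank_roots : \rank (\sum_(j : rootidx I) <<Defs.root pos j>>)%MS = r.

Lemma kstep_good_rk k Psi : kstep_good pos cor k Psi -> rk pos Psi = (r - k)%N.
Proof. by case/(kstep_good_flat rank_roots) => _ rkPsi; rewrite -[in RHS]rkPsi addnK. Qed.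

Lemma hbar_kstep_cellP x : hbar pos x <->
  exists k, (k <= r)%N /\ exists Psi, kstep_good pos cor k Psi /\ Cring pos Psi x.
Proof.
split=> [xhbar|[k [_ [Psi [kPsi xPsi]]]]].
  exists (r - rk pos (finroots x))%N; split; first exact: leq_subr.
  exists (finroots x); split; last exact: hbar_cell.
  apply: (flat_kstep_good cor rank_roots (hbar_finroots_flat xhbar)).
  by rewrite subnKC // rank_leq_col.
by have [flatPsi _] := kstep_good_flat rank_roots kPsi; exact: cell_sub_hbar flatPsi xPsi.
Qed.

Lemma kstep_cells_disjoint k1 k2 Psi1 Psi2 x :
  kstep_good pos cor k1 Psi1 -> kstep_good pos cor k2 Psi2 ->
  Cring pos Psi1 x -> Cring pos Psi2 x -> k1 = k2 /\ Psi1 = Psi2.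
Proof.
move=> kPsi1 kPsi2 xPsi1 xPsi2.
have [flat1 rk1] := kstep_good_flat rank_roots kPsi1.
have [flat2 rk2] := kstep_good_flat rank_roots kPsi2.
have Psi12 : Psi1 = Psi2 by rewrite (cell_finroots flat1 xPsi1) (cell_finroots flat2 xPsi2).
by split=> //; apply/eqP; rewrite -(eqn_add2l (rk pos Psi2)) rk2 -Psi12 rk1.
Qed.

Lemma cells_paving : exists s : seq {set rootidx I},
  [/\ uniq s, (forall Psi, Psi \in s <-> exists k, kstep_good pos cor k Psi) &
      forall n, zclosed (fun x => exists Psi, Psi \in take n s /\ Cring pos Psi x)].
Proof.
pose flats := enum [pred Psi | Psi == flatof pos (span pos Psi)].
pose s := sort (fun A B => rk pos A <= rk pos B)%N flats.
have s_flat Psi : Psi \in s <-> flat pos Psi.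
  by rewrite mem_sort mem_enum; split=> /eqP.
have s_uniq : uniq s by rewrite sort_uniq enum_uniq.
have s_sorted : sorted (fun A B => rk pos A <= rk pos B)%N s.
  by apply: sort_sorted => A B; apply: leq_total.
exists s; split=> // [Psi|n].
  by rewrite (kstep_goodP cor rank_roots Psi); exact: s_flat.
apply: (zclosed_ext (zclosedI (zclosed_hbar pos)
  (zclosed_all (drop n s) (fun G => zclosed_some_infinite C (posroots G))))) => x.
exact: iff_sym (initial_cellsE n x s_uniq s_flat s_sorted).
Qed.

End Decomposition.

Unset Implicit Arguments. Set Strict Implicit. Set Printing Implicit Defensive.

Theorem mainTheorem6 (C : numClosedFieldType) (r : nat) (I : finType)
  (pos cor : I -> 'rV[C]_r)
  (Hroot : is_root_system pos cor) (Hpos : is_positive_system pos) :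
  [/\ ((forall y x, hbar pos x -> hbar pos (act pos y x))
      /\ (forall y h, act pos y (emb pos h) = emb pos (h + y))
      /\ (forall x, act pos 0 x = x)
      /\ (forall y z x, act pos (y + z) x = act pos y (act pos z x))),
    (forall x, hbar pos x <->
       exists k, (k <= r)%N /\ exists Psi, kstep_good pos cor k Psi /\ Cring pos Psi x),
    (forall k1 k2 Psi1 Psi2 x, kstep_good pos cor k1 Psi1 -> kstep_good pos cor k2 Psi2 ->
       Cring pos Psi1 x -> Cring pos Psi2 x -> k1 = k2 /\ Psi1 = Psi2)
  & (forall k Psi, kstep_good pos cor k Psi ->
       (exists x, Cring pos Psi x) /\
       forall x, Cring pos Psi x -> forall z, Cring pos Psi z <-> exists y, z = act pos y x)] /\
  [/\
    ((forall x, Cring pos setT x <-> exists h, x = emb pos h) /\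
     exists A, zclosed A /\ forall x, hbar pos x -> (Cring pos setT x <-> ~ A x)),
    (forall k Psi, kstep_good pos cor k Psi ->
       rk pos Psi = (r - k)%N /\ affine_iso (Cring pos Psi) (rk pos Psi))
  & exists s : seq {set rootidx I},
      [/\ uniq s,
          (forall Psi, Psi \in s <-> exists k, kstep_good pos cor k Psi) &
          forall n, zclosed (fun x => exists Psi, Psi \in take n s /\ Cring pos Psi x)]].
Proof.
have rank_roots : \rank (\sum_(j : rootidx I) <<Defs.root pos j>>)%MS = r.
  by case: Hroot => _ _ _ _ [].
split; split.
- split; [exact: hbar_act | split; [exact: act_emb | split; [exact: act0 | exact: actD]]].
- exact: hbar_kstep_cellP.
- exact: kstep_cells_disjoint.
- move=> k Psi _; split=> [|x xPsi z]; first exact: cell_nonempty.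
  by split=> [/(cell_orbit xPsi)|[y ->]] //; exact: act_cell.
- by split; [exact: cell_setT | exact: cell_setT_open].
- move=> k Psi kPsi; split; first exact: kstep_good_rk kPsi.
  by apply: cell_affine_iso; case: (kstep_good_flat rank_roots kPsi).
- exact: cells_paving.
Qed.
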